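(* Let $\mathcal S = \mathrm{span}\{g_1,\dots,g_{N-k}\}$, with $0\le k\le N$ and $g_1,\dots,g_{N-k}$ independent, be a toy stabilizer group on $N$ elementary systems. Then the epistemic state of $\mathcal S$ can be written as the mixture of $2^k$ pure states; that is, there exist $2^k$ toy stabilizer groups, each with $N$ independent generators, such that the state of $\mathcal S$ is obtained from them by iterated pairwise mixtures.
   Context: Toy Pauli matrices: $\mathcal{X} = \mathrm{diag}(1,-1,1,-1)$, $\mathcal{Y} = \mathrm{diag}(1,-1,-1,1)$, $\mathcal{Z} = \mathrm{diag}(1,1,-1,-1)$; the toy Pauli group is $G_N = \{\alpha\, p_1\otimes\cdots\otimes p_N : p_i \in \{\mathbb{1}_4,\mathcal X,\mathcal Y,\mathcal Z\}, \alpha\in\{\pm1\}\}$. Let $m: G_N\to P_N$ be the homomorphism into the $N$-qubit Pauli group with $m(\mathcal X_k)=X_k$, $m(\mathcal Z_k)=Z_k$, $m(-\mathbb 1)=-\mathbb 1$; $g,h\in G_N$ ''commute'' if $m(g),m(h)$ commute. A toy stabilizer group is a subgroup of $G_N$ whose elements pairwise ''commute'' and which does not contain $-\mathbb 1$; its epistemic state is the set of ontic states $e_{i_1}\otimes\cdots\otimes e_{i_N}$ ($e_i$ the standard basis of $\mathbb R^4$) fixed by every element of the group. A stabilizer group is pure (maximal information) if it has $N$ independent generators, and mixed otherwise. A stabilizer group $\mathcal S'$ is a rephasing of $\mathcal S$ if for every $g\in\mathcal S$, $g\in\mathcal S'$ or $-g\in \mathcal S'$. For two stabilizer groups $\mathcal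 S,\mathcal S'$ that are rephasings of each other, their mixture is the state with stabilizer group $\mathcal S\cap\mathcal S'$. *)

From mathcomp Require Import all_boot all_algebra.
Set Implicit Arguments. Unset Strict Implicit. Unset Printing Implicit Defensive.
Import GRing.Theory Num.Theory.
Local Open Scope ring_scope.

(* Letters of the toy Pauli alphabet, encoded in 'I_4:
   0 = identity 1_4, 1 = X, 2 = Y, 3 = Z. *)
Definition letter := 'I_4.

(* Diagonal entry i (i : 'I_4, the index of the ontic basis vector e_i)
   of the toy Pauli matrix p:
     X = diag(1,-1,1,-1), Y = diag(1,-1,-1,1), Z = diag(1,1,-1,-1). *)
Definition toy_diag (p : letter) (i : 'I_4) : int :=
  match nat_of_ord p, nat_of_ord i with
  | 1, 1 | 1, 3 => -1
  | 2, 1 | 2, 2 => -1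
  | 3, 2 | 3, 3 => -1
  | _, _ => 1
  end.

(* Product of two toy Pauli matrices (they are diagonal, the product is again
   a toy Pauli matrix, with no sign): the table is XOR of the codes. *)
Definition lmul (a b : letter) : letter :=
  inord (match nat_of_ord a, nat_of_ord b with
         | 0, n | n, 0 => n
         | 1, 1 | 2, 2 | 3, 3 => 0
         | 1, 2 | 2, 1 => 3
         | 1, 3 | 3, 1 => 2
         | _, _ => 1
         end).

Lemma toy_diag_lmul (a b i : letter) :
  toy_diag (lmul a b) i = toy_diag a i * toy_diag b i.
Proof.
by case: a => [[|[|[|[|?]]]] ?] //; case: b => [[|[|[|[|?]]]] ?] //;
   case: i => [[|[|[|[|?]]]] ?] //; rewrite /toy_diag /lmul /= inordK.
Qed.

(* Elements of the toy Pauli group G_N: alpha p_1 (x) ... (x) p_N,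
   encoded as (sign, letters) with sign = true meaning alpha = -1. *)
Definition tpauli (N : nat) := (bool * {ffun 'I_N -> letter})%type.

Definition tp_one (N : nat) : tpauli N := (false, [ffun => ord0]).
Definition tp_minus_one (N : nat) : tpauli N := (true, [ffun => ord0]).
Definition tp_neg N (g : tpauli N) : tpauli N := (~~ g.1, g.2).
Definition tp_mul N (g h : tpauli N) : tpauli N :=
  (g.1 (+) h.1, [ffun j => lmul (g.2 j) (h.2 j)]).

(* "Commute": m(g), m(h) commute in the N-qubit Pauli group, i.e. the number
   of sites where the (image) single-qubit Paulis anticommute is even. *)
Definition lanticomm (a b : letter) : bool :=
  [&& nat_of_ord a != 0%N, nat_of_ord b != 0%N & a != b].
Definition tp_commute N (g h : tpauli N) : bool :=
  ~~ odd #|[set j : 'I_N | lanticomm (g.2 j) (h.2 j)]|.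

(* Subgroups of G_N: every element of G_N is its own inverse (tp_mul g g = 1),
   so a subset containing 1 and closed under products is a subgroup. *)
Definition is_subgroup N (S : {set tpauli N}) : bool :=
  (tp_one N \in S) && [forall g in S, forall h in S, tp_mul g h \in S].

Definition toy_span N (gs : seq (tpauli N)) : {set tpauli N} :=
  \bigcap_(H : {set tpauli N} | is_subgroup H && all (mem H) gs) H.

Definition toy_independent N (gs : seq (tpauli N)) : Prop :=
  forall i, (i < size gs)%N ->
    nth (tp_one N) gs i \notin
      toy_span [seq nth (tp_one N) gs j | j <- iota 0 (size gs) & j != i].

Definition is_stab_group N (S : {set tpauli N}) : Prop :=
  [/\ is_subgroup S,
      (forall g h, g \in S -> h \in S -> tp_commute g h) &
      tp_minus_one N \notin S].

Definition pure_stab N (S : {set tpauli N}) : Prop :=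
  is_stab_group S /\
  exists gs : seq (tpauli N), [/\ size gs = N, toy_independent gs & S = toy_span gs].

(* Ontic states e_{i_1} (x) ... (x) e_{i_N}. *)
Definition ontic (N : nat) := {ffun 'I_N -> 'I_4}.

(* g e = e for the product basis vector e. *)
Definition fixes N (g : tpauli N) (e : ontic N) : bool :=
  (if g.1 then -1 else 1) * \prod_(j < N) toy_diag (g.2 j) (e j) == 1 :> int.

Definition epistemic N (S : {set tpauli N}) : {set ontic N} :=
  [set e | [forall g in S, fixes g e]].

Definition rephasing N (S S' : {set tpauli N}) : Prop :=
  forall g, g \in S -> g \in S' \/ tp_neg g \in S'.

(* [mixes l T] : the stabilizer group T is obtained from the list l of
   stabilizer groups (the leaves, in order) by iterated pairwise mixtures:
   the mixture of two stabilizer groups that are rephasings of each other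
   is the state with stabilizer group their intersection. *)
Inductive mixes N : seq {set tpauli N} -> {set tpauli N} -> Prop :=
| mixes_leaf S : is_stab_group S -> mixes [:: S] S
| mixes_node l1 l2 S1 S2 :
    mixes l1 S1 -> mixes l2 S2 -> rephasing S1 S2 -> rephasing S2 S1 ->
    mixes (l1 ++ l2) (S1 :&: S2).

From mathcomp Require Import all_boot all_algebra.
From mathcomp Require Import zify.
Set Implicit Arguments. Unset Strict Implicit. Unset Printing Implicit Defensive.

(* When k > 0 the group S = span gs has fewer than N
   generators, and a counting argument yields a sign-free h that commutes
   with S while neither h nor -h lies in S: the sign-free elements
   commuting with the m = N - k generators number at least 4^N / 2^m, more
   than the at most 2^m letter strings occurring in S.  Then span (h :: gs) and
   span (-h :: gs) are stabilizer groups with N - k + 1 independent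
   generators, rephasings of each other, whose intersection is S; each
   decomposes into 2^(k-1) pure states by induction, and no pure state
   occurs on both sides, since a stabilizer group cannot contain h and -h. *)

Ltac case_letter a := case: a => [[|[|[|[|?]]]] ?] //.

Lemma lmulE (a b : letter) : nat_of_ord (lmul a b) =
  (match nat_of_ord a, nat_of_ord b with
   | 0, n | n, 0 => n
   | 1, 1 | 2, 2 | 3, 3 => 0
   | 1, 2 | 2, 1 => 3
   | 1, 3 | 3, 1 => 2
   | _, _ => 1
   end)%N.
Proof. by rewrite /lmul inordK //; case_letter a; case_letter b. Qed.

Lemma lmulA : associative lmul.
Proof.
move=> a b c; apply: ord_inj; rewrite !lmulE.
by case_letter a; case_letter b; case_letter c; rewrite /= !lmulE.
Qed.

Lemma lmulC : commutative lmul.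
Proof. by move=> a b; apply: ord_inj; rewrite !lmulE; case_letter a; case_letter b. Qed.

Lemma lmul0l : left_id ord0 lmul.
Proof. by move=> a; apply: ord_inj; rewrite !lmulE; case_letter a. Qed.

Lemma lmulxx (a : letter) : lmul a a = ord0.
Proof. by apply: ord_inj; rewrite !lmulE; case_letter a. Qed.

Lemma lanticomm_mull (a b c : letter) :
  lanticomm (lmul a b) c = lanticomm a c (+) lanticomm b c.
Proof.
rewrite /lanticomm -!val_eqE /= !lmulE.
by case_letter a; case_letter b; case_letter c.
Qed.

Lemma lanticommC (a b : letter) : lanticomm a b = lanticomm b a.
Proof. by rewrite /lanticomm -!val_eqE /=; case_letter a; case_letter b. Qed.

Lemma lanticommxx (a : letter) : lanticomm a a = false.
Proof. by rewrite /lanticomm eqxx !andbF. Qed.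

Lemma lanticomm0r (a : letter) : lanticomm a ord0 = false.
Proof. by rewrite /lanticomm /= andbF. Qed.

Lemma odd_card_addb (T : finType) (P Q : pred T) :
  odd #|[set x | P x (+) Q x]| = odd #|[set x | P x]| (+) odd #|[set x | Q x]|.
Proof.
have card_sum (R : pred T) : #|[set x | R x]| = \sum_x nat_of_bool (R x).
  by rewrite cardsE -sum1_card big_mkcond; apply: eq_bigr => x _; rewrite unfold_in.
rewrite !card_sum.
apply: (big_rec3 (fun x y z => odd x = odd y (+) odd z)) => //= x m n p _ IH.
by rewrite !oddD IH; case: (P x); case: (Q x); case: (odd n); case: (odd p).
Qed.

Lemma map_nth_iota_neq0_cons (T : Type) (x0 h : T) (s : seq T) :
  [seq nth x0 (h :: s) j | j <- iota 0 (size (h :: s)) & j != 0] = s.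
Proof.
rewrite /= (iotaDl 1 0) filter_map -map_comp (eq_filter (a2 := predT)) //.
by rewrite filter_predT -[RHS](mkseq_nth x0).
Qed.

Lemma map_nth_iota_neqS_cons (T : Type) (x0 h : T) (s : seq T) (i : nat) :
  [seq nth x0 (h :: s) j | j <- iota 0 (size (h :: s)) & j != i.+1] =
  h :: [seq nth x0 s j | j <- iota 0 (size s) & j != i].
Proof. by rewrite /= (iotaDl 1 0) filter_map -map_comp. Qed.

Section ToyPauliGroup.
Variable N : nat.
Implicit Types g h s t : tpauli N.

Lemma tp_mulA g h s : tp_mul g (tp_mul h s) = tp_mul (tp_mul g h) s.
Proof. by rewrite /tp_mul /= addbA; congr pair; apply/ffunP => j; rewrite !ffunE lmulA. Qed.

Lemma tp_mulC g h : tp_mul g h = tp_mul h g.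
Proof. by rewrite /tp_mul /= addbC; congr pair; apply/ffunP => j; rewrite !ffunE lmulC. Qed.

Lemma tp_mul1g g : tp_mul (tp_one N) g = g.
Proof. by case: g => b f; congr pair; apply/ffunP => j; rewrite !ffunE lmul0l. Qed.

Lemma tp_mulgg g : tp_mul g g = tp_one N.
Proof. by rewrite /tp_mul /= addbb; congr pair; apply/ffunP => j; rewrite !ffunE lmulxx. Qed.

Lemma tp_mulKg g h : tp_mul g (tp_mul g h) = h.
Proof. by rewrite tp_mulA tp_mulgg tp_mul1g. Qed.

Lemma tp_negE g : tp_neg g = tp_mul (tp_minus_one N) g.
Proof. by case: g => b f; congr pair; apply/ffunP => j; rewrite !ffunE lmul0l. Qed.

Lemma tp_negK g : tp_neg (tp_neg g) = g.
Proof. by rewrite !tp_negE tp_mulKg. Qed.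

Lemma tp_mul_neg g : tp_mul g (tp_neg g) = tp_minus_one N.
Proof. by rewrite tp_negE tp_mulC -tp_mulA tp_mulgg tp_mulC tp_mul1g. Qed.

Definition tp_anticomm g h := odd #|[set j : 'I_N | lanticomm (g.2 j) (h.2 j)]|.

Lemma tp_commuteE g h : tp_commute g h = ~~ tp_anticomm g h.
Proof. by []. Qed.

Lemma tp_anticomm_mull g h s :
  tp_anticomm (tp_mul g h) s = tp_anticomm g s (+) tp_anticomm h s.
Proof.
rewrite /tp_anticomm -odd_card_addb; congr (odd _); apply: eq_card => j.
by rewrite !inE ffunE lanticomm_mull.
Qed.

Lemma tp_anticommC g h : tp_anticomm g h = tp_anticomm h g.
Proof. by rewrite /tp_anticomm; congr (odd _); apply: eq_card => j; rewrite !inE lanticommC. Qed.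

Lemma tp_anticomm_mulr g h s :
  tp_anticomm s (tp_mul g h) = tp_anticomm s g (+) tp_anticomm s h.
Proof. by rewrite tp_anticommC tp_anticomm_mull !(tp_anticommC s). Qed.

Lemma tp_anticommxx g : tp_anticomm g g = false.
Proof. by rewrite /tp_anticomm (eq_card (B := set0)) ?cards0 // => j; rewrite !inE lanticommxx. Qed.

Lemma tp_anticomm1r g : tp_anticomm g (tp_one N) = false.
Proof. by rewrite /tp_anticomm (eq_card (B := set0)) ?cards0 // => j; rewrite !inE ffunE lanticomm0r. Qed.

End ToyPauliGroup.

Section ToySpan.
Variable N : nat.
Implicit Types g h s t : tpauli N.
Implicit Types (gs : seq (tpauli N)) (H : {set tpauli N}).

Lemma subgroupP H :
  reflect (tp_one N \in H /\ forall g h, g \in H -> h \in H -> tp_mul g h \in H)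
          (is_subgroup H).
Proof.
apply: (iffP andP) => -[-> closedH]; split=> //.
  by move=> g h gH hH; move/forall_inP/(_ g gH)/forall_inP: closedH; apply.
by apply/forall_inP => g gH; apply/forall_inP => h hH; apply: closedH.
Qed.

Lemma toy_span_subgroup gs : is_subgroup (toy_span gs).
Proof.
apply/subgroupP; split; first by apply/bigcapP => H /andP[/subgroupP[]].
move=> g h /bigcapP gS /bigcapP hS; apply/bigcapP => H HP.
by case/andP: (HP) => /subgroupP[_ closedH] _; apply: closedH; [apply: gS | apply: hS].
Qed.

Lemma mem_toy_span gs g : g \in gs -> g \in toy_span gs.
Proof. by move=> gs_g; apply/bigcapP => H /andP[_ /allP/(_ g gs_g)]. Qed.

Lemma toy_span_min gs H : is_subgroup H -> all (mem H) gs -> toy_span gs \subset H.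
Proof. by move=> sH gsH; apply: bigcap_inf; rewrite sH gsH. Qed.

Lemma toy_span1 gs : tp_one N \in toy_span gs.
Proof. by case/subgroupP: (toy_span_subgroup gs). Qed.

Lemma toy_spanM gs g h :
  g \in toy_span gs -> h \in toy_span gs -> tp_mul g h \in toy_span gs.
Proof. by case/subgroupP: (toy_span_subgroup gs) => _; apply. Qed.

Lemma toy_span_cons h gs :
  toy_span (h :: gs) = toy_span gs :|: [set tp_mul h s | s in toy_span gs].
Proof.
have sub : toy_span gs \subset toy_span (h :: gs).
  apply: toy_span_min; first exact: toy_span_subgroup.
  by apply/allP => g gs_g; apply: mem_toy_span; rewrite inE gs_g orbT.
apply/eqP; rewrite eqEsubset; apply/andP; split.
  apply: toy_span_min.
    apply/subgroupP; split; first by rewrite inE toy_span1.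
    move=> g k; rewrite !inE => /orP[gS|/imsetP[s sS ->]] /orP[kS|/imsetP[t tS ->]].
    - by rewrite toy_spanM.
    - by rewrite tp_mulA (tp_mulC g h) -tp_mulA imset_f ?orbT ?toy_spanM.
    - by rewrite -tp_mulA imset_f ?orbT ?toy_spanM.
    - by rewrite (tp_mulC h s) -tp_mulA tp_mulKg toy_spanM.
  rewrite /= inE; apply/andP; split.
    by apply/orP; right; apply/imsetP; exists (tp_one N); rewrite ?toy_span1 // tp_mulC tp_mul1g.
  by apply/allP => g gs_g; rewrite /= inE mem_toy_span.
rewrite subUset sub /=; apply/subsetP => _ /imsetP[s sS ->].
by apply: toy_spanM; [apply: mem_toy_span; rewrite inE eqxx | apply: (subsetP sub)].
Qed.

Lemma card_toy_span gs : #|toy_span gs| <= 2 ^ size gs.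
Proof.
elim: gs => [|h gs IH] /=.
  have span_nil : toy_span [::] \subset [set tp_one N].
    apply: toy_span_min => //; apply/subgroupP; split; first by rewrite inE.
    by move=> g h; rewrite !inE => /eqP-> /eqP->; rewrite tp_mulgg.
  by rewrite (leq_trans (subset_leq_card span_nil)) ?cards1.
rewrite toy_span_cons expnS mul2n -addnn (leq_trans (leq_card_setU _ _)) //.
by rewrite leq_add // (leq_trans (leq_imset_card _ _)).
Qed.

Lemma toy_independent_cons h gs :
  toy_independent gs -> h \notin toy_span gs -> toy_independent (h :: gs).
Proof.
move=> indep hS [|i] lt_i; first by rewrite map_nth_iota_neq0_cons.
rewrite map_nth_iota_neqS_cons toy_span_cons inE negb_or /=.
rewrite ltnS in lt_i; have := indep i lt_i.
set others := [seq _ | _ <- _ & _] => ->; apply/imsetP => -[s sS gi_hs].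
have others_gs : toy_span others \subset toy_span gs.
  apply: toy_span_min; first exact: toy_span_subgroup.
  apply/allP => x /mapP[j]; rewrite mem_filter mem_iota => /andP[_ lt_j] ->.
  exact/mem_toy_span/mem_nth.
have gi_gs : nth (tp_one N) gs i \in toy_span gs by exact/mem_toy_span/mem_nth.
move/negP: hS; apply; rewrite -(tp_mulKg s h) (tp_mulC s h) tp_mulC -gi_hs.
by rewrite toy_spanM // (subsetP others_gs).
Qed.

End ToySpan.

Section StabilizerExtension.
Variable N : nat.
Implicit Types g h s t x : tpauli N.
Implicit Types gs : seq (tpauli N).

Lemma tp_anticomm_toy_span h gs :
  (forall g, g \in gs -> tp_anticomm h g = false) ->
  forall s, s \in toy_span gs -> tp_anticomm h s = false.
Proof.
move=> h_gs s sS; apply/negbTE.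
suff /subsetP/(_ s sS) : toy_span gs \subset [set x | ~~ tp_anticomm h x] by rewrite inE.
apply: toy_span_min; last by apply/allP => g gs_g; rewrite /= inE h_gs.
apply/subgroupP; split; first by rewrite inE tp_anticomm1r.
by move=> x y; rewrite !inE tp_anticomm_mulr => /negbTE-> /negbTE->.
Qed.

Lemma is_stab_group_cons h gs :
  is_stab_group (toy_span gs) ->
  (forall g, g \in gs -> tp_anticomm h g = false) -> tp_neg h \notin toy_span gs ->
  is_stab_group (toy_span (h :: gs)).
Proof.
case=> _ commS negS h_gs neghS.
have hS := tp_anticomm_toy_span h_gs.
have {}commS s t : s \in toy_span gs -> t \in toy_span gs -> tp_anticomm s t = false.
  by move=> sS tS; apply/negbTE/commS.
split; first exact: toy_span_subgroup.
  move=> x y; rewrite toy_span_cons !inE tp_commuteE.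
  case/orP=> [xS|/imsetP[s sS ->]]; case/orP=> [yS|/imsetP[t tS ->]].
  - by rewrite commS.
  - by rewrite tp_anticomm_mulr tp_anticommC hS // commS.
  - by rewrite tp_anticomm_mull hS // commS.
  - by rewrite !tp_anticomm_mull !tp_anticomm_mulr tp_anticommxx (tp_anticommC s h) !hS // commS.
rewrite toy_span_cons inE negb_or negS /=; apply/imsetP => -[s sS m1_hs].
by move/negP: neghS; apply; rewrite tp_negE m1_hs tp_mulC tp_mulKg.
Qed.

Lemma rephasing_toy_span_cons h gs :
  rephasing (toy_span (h :: gs)) (toy_span (tp_neg h :: gs)).
Proof.
move=> x; rewrite !toy_span_cons !inE => /orP[->|/imsetP[s sS ->]]; first by left.
right; apply/orP; right; apply/imsetP; exists s => //.
by rewrite !tp_negE tp_mulA.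
Qed.

Lemma toy_span_cons_negI h gs : tp_minus_one N \notin toy_span gs ->
  toy_span (h :: gs) :&: toy_span (tp_neg h :: gs) = toy_span gs.
Proof.
move=> m1S; apply/setP => x; rewrite inE !toy_span_cons !inE.
case xS: (x \in toy_span gs) => //=.
apply/negP => /andP[/imsetP[s sS xs] /imsetP[t tS xt]].
move/negP: m1S; apply.
have -> : tp_minus_one N = tp_mul s t.
  rewrite -(tp_mulKg h s) -(tp_mulKg (tp_neg h) t) -xs -xt (tp_mulC (tp_neg h)).
  by rewrite tp_mulA -(tp_mulA h) tp_mulgg (tp_mulC h) tp_mul1g tp_mul_neg.
exact: toy_spanM.
Qed.

End StabilizerExtension.

Section Counting.
Variable N : nat.
Implicit Types gs : seq (tpauli N).
Implicit Types f : {ffun 'I_N -> letter}.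

Definition commutant gs : {set {ffun 'I_N -> letter}} :=
  [set f | all (fun g => ~~ tp_anticomm ((false, f) : tpauli N) g) gs].

Definition ffun_lmul f0 f : {ffun 'I_N -> letter} := [ffun j => lmul (f0 j) (f j)].

Lemma ffun_lmulK f0 : involutive (ffun_lmul f0).
Proof. by move=> f; apply/ffunP => j; rewrite !ffunE lmulA lmulxx lmul0l. Qed.

Lemma tp_anticomm_ffun_lmul f0 f (y : tpauli N) :
  tp_anticomm ((false, ffun_lmul f0 f) : tpauli N) y =
  tp_anticomm ((false, f0) : tpauli N) y (+) tp_anticomm ((false, f) : tpauli N) y.
Proof. exact: (tp_anticomm_mull (false, f0) (false, f)). Qed.

(* Multiplication by any f0 in A :\: B maps A :\: B injectively into B. *)
Lemma card_commutant_cons g gs : #|commutant gs| <= 2 * #|commutant (g :: gs)|.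
Proof.
set A := commutant gs; set B := commutant (g :: gs).
have BA : B \subset A by apply/subsetP => f; rewrite !inE => /andP[].
rewrite -(cardsID B A) mul2n -addnn leq_add ?(subset_leq_card (subsetIr _ _)) //.
have [->|[f0 f0AB]] := set_0Vmem (A :\: B); first by rewrite cards0.
have [f0A f0g] : f0 \in A /\ tp_anticomm (false, f0) g.
  by move: f0AB; rewrite !inE => /andP[/nandP[/negbNE|/negP]].
rewrite -(card_imset _ (inv_inj (ffun_lmulK f0))) subset_leq_card //.
apply/subsetP => _ /imsetP[f /setDP[fA fB] ->].
have fg : tp_anticomm (false, f) g.
  by move: fB fA; rewrite !inE => /nandP[/negbNE|/negP].
move: f0A fA; rewrite !inE /= tp_anticomm_ffun_lmul f0g fg => /allP f0A /allP fA.
by apply/allP => y gs_y; rewrite tp_anticomm_ffun_lmul (negbTE (f0A y gs_y)) (negbTE (fA y gs_y)).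
Qed.

Lemma card_commutant gs : 4 ^ N <= 2 ^ size gs * #|commutant gs|.
Proof.
elim: gs => [|g gs IH].
  have -> : commutant [::] = setT by apply/setP => f; rewrite !inE.
  by rewrite cardsT card_ffun !card_ord mul1n.
by rewrite (leq_trans IH) //= expnS -mulnA mulnCA leq_mul2l card_commutant_cons orbT.
Qed.

Lemma exists_commuting_outside_span gs : size gs < N ->
  exists h : tpauli N, [/\ forall g, g \in gs -> tp_anticomm h g = false,
     h \notin toy_span gs & tp_neg h \notin toy_span gs].
Proof.
move=> lt_gs_N; set I := [set x.2 | x in toy_span gs].
have cardI : #|I| <= 2 ^ size gs by rewrite (leq_trans (leq_imset_card _ _)) ?card_toy_span.
have [comm_sub_I|/subsetPn[f fC fI]] := boolP (commutant gs \subset I).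
  have : 2 ^ (2 * N) <= 2 ^ (size gs + size gs).
    rewrite expnM expnD (leq_trans (card_commutant gs)) // leq_mul2l.
    by rewrite (leq_trans (subset_leq_card comm_sub_I)) ?orbT.
  by rewrite leq_exp2l //; lia.
exists (false, f); split.
- by move=> g gs_g; move: fC; rewrite inE => /allP/(_ g gs_g)/negbTE.
- by apply: contra fI => hS; apply/imsetP; exists (false, f).
- by apply: contra fI => hS; apply/imsetP; exists (true, f).
Qed.

End Counting.

Section Decomposition.
Variable N : nat.
Implicit Types gs : seq (tpauli N).

Lemma mixes_subset l (T : {set tpauli N}) : mixes l T -> forall P, P \in l -> T \subset P.
Proof.
elim=> [S _|l1 l2 S1 S2 _ IH1 _ IH2 _ _] P; first by rewrite inE => /eqP->.
rewrite mem_cat => /orP[/IH1|/IH2]; apply: subset_trans; [exact: subsetIl | exact: subsetIr].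
Qed.

Lemma stab_group_neg_notin (P : {set tpauli N}) h :
  is_stab_group P -> h \in P -> tp_neg h \notin P.
Proof.
case=> /subgroupP[_ closedP] _ m1P hP; apply: contra m1P => neghP.
by rewrite -(tp_mul_neg h) closedP.
Qed.

Lemma mixes_pure_decomposition k gs :
  k <= N -> size gs = N - k -> toy_independent gs -> is_stab_group (toy_span gs) ->
  exists leaves : seq {set tpauli N},
    [/\ size leaves = 2 ^ k, uniq leaves,
        forall P, P \in leaves -> pure_stab P & mixes leaves (toy_span gs)].
Proof.
elim: k gs => [|k IH] gs le_k_N size_gs indep stabS.
  exists [:: toy_span gs]; split=> //; last exact: mixes_leaf.
  by move=> P; rewrite inE => /eqP->; split=> //; exists gs; rewrite size_gs subn0.
have [|h [h_gs hS neghS]] := @exists_commuting_outside_span N gs; first by rewrite size_gs; lia.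
have le_k_N' : k <= N by lia.
have size_cons x : size (x :: gs) = N - k by rewrite /= size_gs; lia.
have [l1 [size1 uniq1 pure1 mixes1]] := IH _ le_k_N' (size_cons h)
  (toy_independent_cons indep hS) (is_stab_group_cons stabS h_gs neghS).
have stab2 : is_stab_group (toy_span (tp_neg h :: gs)).
  by apply: is_stab_group_cons; rewrite ?tp_negK.
have [l2 [size2 uniq2 pure2 mixes2]] := IH _ le_k_N' (size_cons (tp_neg h))
  (toy_independent_cons indep neghS) stab2.
exists (l1 ++ l2); split.
- by rewrite size_cat size1 size2 expnS mul2n addnn.
- rewrite cat_uniq uniq1 uniq2 andbT /=; apply/hasPn => P P2; apply/negP => P1.
  have [stabP _] := pure1 P P1.
  have hP : h \in P by rewrite (subsetP (mixes_subset mixes1 P1)) ?mem_toy_span ?mem_head.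
  have neghP : tp_neg h \in P.
    by rewrite (subsetP (mixes_subset mixes2 P2)) ?mem_toy_span ?mem_head.
  by move: (stab_group_neg_notin stabP hP); rewrite neghP.
- by move=> P; rewrite mem_cat => /orP[/pure1|/pure2].
case: stabS => _ _ m1S; rewrite -(toy_span_cons_negI h m1S).
have := rephasing_toy_span_cons (h := tp_neg h) (gs := gs); rewrite tp_negK.
exact: mixes_node mixes1 mixes2 (rephasing_toy_span_cons (h := h) (gs := gs)).
Qed.

End Decomposition.

Unset Implicit Arguments.

Theorem mainTheorem4 (N k : nat) (gs : seq (tpauli N)) :
  (k <= N)%N -> size gs = (N - k)%N -> toy_independent gs ->
  is_stab_group (toy_span gs) ->
  exists leaves : seq {set tpauli N},
    [/\ size leaves = (2 ^ k)%N, uniq leaves,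
        (forall P, P \in leaves -> pure_stab P) &
        exists T, mixes leaves T /\ epistemic T = epistemic (toy_span gs)].
Proof.
move=> le_k_N size_gs indep stabS.
have [leaves [size_leaves uniq_leaves pure_leaves mixes_leaves]] :=
  mixes_pure_decomposition le_k_N size_gs indep stabS.
by exists leaves; split=> //; exists (toy_span gs).
Qed.
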